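(* Let $\mathcal{K}=(\mathcal{R},\mathcal{T})$ be an ME-consistent $\mathcal{ALCP}$ knowledge base over $\mathcal{L}$, $C,D$ concepts and $\kappa\in\mathcal{L}$ with $P^{ME}_{\mathcal{R}}(\kappa)>0$. For every $\mathcal{ALCP}$-model $\mathcal{P}$ of $\mathcal{K}$ there exist pithy $\mathcal{ALCP}$-models $\mathcal{Q}_1,\mathcal{Q}_2$ of $\mathcal{K}$ such that $\Pr_{\mathcal{Q}_1}(C\sqsubseteq D\mid\kappa)\le\Pr_{\mathcal{P}}(C\sqsubseteq D\mid\kappa)\le\Pr_{\mathcal{Q}_2}(C\sqsubseteq D\mid\kappa)$ and $P^{\mathcal{P}}=P^{\mathcal{Q}_1}=P^{\mathcal{Q}_2}$.
   Context: $\mathcal{L}$ is a propositional language over a finite set of variables; $\mathrm{Int}(\mathcal{L})$ is the set of truth assignments. A probability distribution over $\mathcal{L}$ is $P:\mathrm{Int}(\mathcal{L})\to[0,1]$ summing to $1$, with $P(\phi)=\sum_{v\models\phi}P(v)$. A probabilistic constraint is $c_0+\sum_{i=1}^k c_i\,\mathsf{p}(\phi_i)\ge 0$ ($c_i\in\mathbb{R}$, $\phi_i\in\mathcal{L}$), satisfied by $P$ iff $c_0+\sum_ic_iP(\phi_i)\ge0$; $\mathrm{Mod}(\mathcal{R})$ is the set of distributions satisfying all constraints in $\mathcal{R}$; for consistent $\mathcal{R}$, $P^{ME}_{\mathcal{R}}$ is the unique maximizer in $\mathrm{Mod}(\mathcal{R})$ of $H(P)=-\sum_vP(v)\log P(v)$.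 Concepts: $C::=A\mid\neg C\mid C\sqcap C\mid\exists r.C$. An $\mathcal{L}$-GCI is $\langle C\sqsubseteq D:\kappa\rangle$, $\kappa\in\mathcal{L}$; an $\mathcal{L}$-TBox is a finite set of them; a KB is $\mathcal{K}=(\mathcal{R},\mathcal{T})$. A possible world $\mathcal{I}=(\Delta^{\mathcal{I}},\cdot^{\mathcal{I}},v^{\mathcal{I}})$ is a classical $\mathcal{ALC}$ interpretation together with $v^{\mathcal{I}}\in\mathrm{Int}(\mathcal{L})$; it models $\langle C\sqsubseteq D:\kappa\rangle$ iff $v^{\mathcal{I}}\not\models\kappa$ or $C^{\mathcal{I}}\subseteq D^{\mathcal{I}}$. An $\mathcal{ALCP}$-interpretation $\mathcal{P}=(\mathfrak{I},P_{\mathfrak{I}})$ is a nonempty finite set of possible worlds with a probability distribution on it; $P^{\mathcal{P}}(v)=\sum_{\mathcal{I}\in\mathfrak{I},v^{\mathcal{I}}=v}P_{\mathfrak{I}}(\mathcal{I})$. $\mathcal{P}$ is an $\mathcal{ALCP}$-model of $\mathcal{K}$ iff all its worlds model every GCI of $\mathcal{T}$ and $P^{\mathcal{P}}\in\mathrm{Mod}(\mathcal{R})$; it is an ME-$\mathcal{ALCP}$-model if moreover $P^{\mathcal{P}}=P^{ME}_{\mathcal{R}}$; $\mathcal{K}$ is ME-consistent iff an ME-$\mathcal{ALCP}$-model exists. $\mathcal{P}$ is pithy iff for every $w\in\mathrm{Int}(\mathcal{L})$ there is at most one $\mathcal{I}\in\mathfrak{I}$ with $v^{\mathcal{I}}=w$.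 $\Pr_{\mathcal{P}}(C\sqsubseteq D\mid\kappa)=\big(\sum_{\mathcal{I}\in\mathfrak{I},v^{\mathcal{I}}\models\kappa,C^{\mathcal{I}}\subseteq D^{\mathcal{I}}}P_{\mathfrak{I}}(\mathcal{I})\big)/\big(\sum_{\mathcal{I}\in\mathfrak{I},v^{\mathcal{I}}\models\kappa}P_{\mathfrak{I}}(\mathcal{I})\big)$. *)

From HB Require Import structures.
From mathcomp Require Import all_boot all_order all_algebra.
From mathcomp Require Import boolp reals exp.
From Stdlib Require List.
Set Implicit Arguments. Unset Strict Implicit. Unset Printing Implicit Defensive.
Import Order.TTheory GRing.Theory Num.Theory.
Local Open Scope ring_scope.

Inductive pform (V : Type) : Type :=
| FVar of V
| FTop
| FNot of pform V
| FAnd of pform V & pform V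
| FOr of pform V & pform V.

Definition assign (V : finType) := {ffun V -> bool}.

Fixpoint fsat (V : finType) (v : assign V) (phi : pform V) : bool :=
  match phi with
  | FVar x => v x
  | FTop => true
  | FNot p => ~~ fsat v p
  | FAnd p q => fsat v p && fsat v q
  | FOr p q => fsat v p || fsat v q
  end.

Definition is_distr (R : realType) (V : finType) (P : {ffun assign V -> R}) : Prop :=
  (forall v, 0 <= P v) /\ \sum_(v : assign V) P v = 1.

Definition fprob (R : realType) (V : finType) (P : {ffun assign V -> R}) (phi : pform V) : R :=
  \sum_(v : assign V | fsat v phi) P v.

Record pconstr (R : realType) (V : finType) := PConstr {
  pc_c0 : R;
  pc_terms : seq (R * pform V) }.

Definition sat_constr (R : realType) (V : finType) (P : {ffun assign V -> R})
  (c : pconstr R V) : Prop :=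
  0 <= pc_c0 c + \sum_(t <- pc_terms c) t.1 * fprob P t.2.

Definition Mod (R : realType) (V : finType) (Rs : seq (pconstr R V))
  (P : {ffun assign V -> R}) : Prop :=
  is_distr P /\ forall c, List.In c Rs -> sat_constr P c.

Definition entropy (R : realType) (V : finType) (P : {ffun assign V -> R}) : R :=
  - \sum_(v : assign V) (if P v == 0 then 0 else P v * ln (P v)).

Definition is_ME (R : realType) (V : finType) (Rs : seq (pconstr R V))
  (P : {ffun assign V -> R}) : Prop :=
  Mod Rs P /\ forall Q, Mod Rs Q -> entropy Q <= entropy P.

Inductive concept (CN RN : Type) : Type :=
| CAtom of CN
| CNeg of concept CN RN
| CAnd of concept CN RN & concept CN RN
| CEx of RN & concept CN RN.

Record gci (CN RN : Type) (V : Type) := GCI {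
  gci_C : concept CN RN; gci_D : concept CN RN; gci_ctx : pform V }.

Definition tbox (CN RN V : Type) := seq (gci CN RN V).

Record world (CN RN : Type) (V : finType) := World {
  wdom : Type;
  wdom_elt : wdom;                         (* nonempty domain *)
  wconc : CN -> wdom -> Prop;
  wrole : RN -> wdom -> wdom -> Prop;
  wval : assign V }.

Fixpoint cext (CN RN : Type) (V : finType) (I : world CN RN V)
  (C : concept CN RN) : wdom I -> Prop :=
  match C with
  | CAtom A => @wconc CN RN V I A
  | CNeg C' => fun x => ~ cext C' x
  | CAnd C1 C2 => fun x => cext C1 x /\ cext C2 x
  | CEx r C' => fun x => exists y, @wrole CN RN V I r x y /\ cext C' y
  end.
Arguments cext {CN RN V} I C _.

Definition subsumes (CN RN : Type) (V : finType) (I : world CN RN V)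
  (C D : concept CN RN) : Prop :=
  forall x, cext I C x -> cext I D x.

Definition world_models_gci (CN RN : Type) (V : finType) (I : world CN RN V)
  (g : gci CN RN V) : Prop :=
  ~~ fsat (wval I) (gci_ctx g) \/ subsumes I (gci_C g) (gci_D g).

Record alcp_interp (R : realType) (CN RN : Type) (V : finType) := ALCPInterp {
  aidx : finType;
  aworld : aidx -> world CN RN V;
  apr : aidx -> R;
  aidx_nonempty : (0 < #|aidx|)%N;
  apr_ge0 : forall i, 0 <= apr i;
  apr_sum1 : \sum_(i : aidx) apr i = 1 }.

Definition adistr (R : realType) (CN RN : Type) (V : finType)
  (P : alcp_interp R CN RN V) : {ffun assign V -> R} :=
  [ffun w => \sum_(i : aidx P | wval (aworld i) == w) apr i].

Record kb (R : realType) (CN RN : Type) (V : finType) := KB {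
  kb_R : seq (pconstr R V);
  kb_T : tbox CN RN V }.

Definition alcp_model (R : realType) (CN RN : Type) (V : finType)
  (K : kb R CN RN V) (P : alcp_interp R CN RN V) : Prop :=
  (forall (i : aidx P) g, List.In g (kb_T K) -> world_models_gci (aworld i) g) /\
  Mod (kb_R K) (adistr P).

Definition me_alcp_model (R : realType) (CN RN : Type) (V : finType)
  (K : kb R CN RN V) (P : alcp_interp R CN RN V) : Prop :=
  alcp_model K P /\ is_ME (kb_R K) (adistr P).

Definition ME_consistent (R : realType) (CN RN : Type) (V : finType)
  (K : kb R CN RN V) : Prop :=
  exists P, me_alcp_model K P.

Definition pithy (R : realType) (CN RN : Type) (V : finType)
  (P : alcp_interp R CN RN V) : Prop :=
  forall i j : aidx P, wval (aworld i) = wval (aworld j) -> i = j.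

Definition cprob (R : realType) (CN RN : Type) (V : finType)
  (P : alcp_interp R CN RN V) (C D : concept CN RN) (kappa : pform V) : R :=
  (\sum_(i : aidx P | fsat (wval (aworld i)) kappa &&
                      `[< subsumes (aworld i) C D >]) apr i) /
  (\sum_(i : aidx P | fsat (wval (aworld i)) kappa) apr i).

From mathcomp Require Import all_boot all_order all_algebra.
From mathcomp Require Import boolp reals exp.
Import Order.TTheory GRing.Theory Num.Theory.
Local Open Scope ring_scope.
Set Implicit Arguments. Unset Strict Implicit.

(* Merge all worlds of P sharing a valuation into a single representative world
   carrying their total weight.  This keeps P^P, every world still satisfies the
   TBox, and the conditional probability of C ⊑ D is pushed down (resp. up) by
   choosing, for each valuation, a representative violating (resp. satisfying)
   C ⊑ D whenever one exists. *)

Section PithyReduct.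
Variables (R : realType) (CN RN : Type) (V : finType) (P : alcp_interp R CN RN V).

Definition realized (w : assign V) : bool := [exists i : aidx P, wval (aworld i) == w].

Definition realized_val : finType := {w in realized}.

Definition mass_at (b : pred (aidx P)) (w : assign V) : R :=
  \sum_(i | (wval (aworld i) == w) && b i) apr i.

Lemma mass_at_predT (w : assign V) : mass_at predT w = adistr P w.
Proof. by rewrite ffunE; apply: eq_bigl => i; rewrite andbT. Qed.

Lemma mass_at_le_adistr (b : pred (aidx P)) (w : assign V) :
  mass_at b w <= adistr P w.
Proof.
rewrite -mass_at_predT [leRHS](bigID b) /= [X in _ <= X + _](_ : _ = mass_at b w).
  by rewrite lerDl; apply: sumr_ge0 => i _; apply: apr_ge0.
by apply: eq_bigl => i; rewrite andbT.
Qed.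

Lemma mass_at_unrealized (b : pred (aidx P)) (w : assign V) :
  ~~ realized w -> mass_at b w = 0.
Proof.
move=> /existsPn Pw; apply: big1 => i /andP [wi _].
by move: (Pw i); rewrite wi.
Qed.

Lemma sum_realized (F : assign V -> R) (c : pred (assign V)) :
  (forall w, ~~ realized w -> F w = 0) ->
  \sum_(w | c w) F w = \sum_(x : realized_val | c (val x)) F (val x).
Proof.
move=> F0; rewrite -big_sub_cond (bigID realized) /= [X in _ + X]big1 ?addr0.
  by apply: eq_bigl => w; rewrite andbC.
by move=> w /andP [_]; apply: F0.
Qed.

Lemma sum_by_valuation (kappa : pform V) (b : pred (aidx P)) :
  \sum_(i | fsat (wval (aworld i)) kappa && b i) apr i
  = \sum_(x : realized_val | fsat (val x) kappa) mass_at b (val x).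
Proof.
rewrite (partition_big (fun i => wval (aworld i)) (fun w => fsat w kappa)) /=;
  last by move=> i /andP [].
rewrite -(sum_realized (F := mass_at b) (fun w => fsat w kappa));
  last exact: mass_at_unrealized.
apply: eq_bigr => w kw; apply: eq_bigl => i.
by case: eqP => [->|]; rewrite ?andbF ?andbT // kw.
Qed.

Definition prefers (b : pred (aidx P)) (w : assign V) (i : aidx P) : bool :=
  (wval (aworld i) == w) &&
  (b i || ~~ [exists j : aidx P, (wval (aworld j) == w) && b j]).

Lemma prefers_exists (b : pred (aidx P)) (w : assign V) :
  realized w -> exists i, prefers b w i.
Proof.
move=> /existsP [i wi].
have [/existsP [j /andP [wj bj]]|nb] :=
  boolP [exists j : aidx P, (wval (aworld j) == w) && b j].
  by exists j; rewrite /prefers wj bj.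
by exists i; rewrite /prefers wi nb orbT.
Qed.

Definition rep (b : pred (aidx P)) (x : realized_val) : aidx P :=
  xchoose (prefers_exists b (valP x)).

Lemma rep_val (b : pred (aidx P)) (x : realized_val) :
  wval (aworld (rep b x)) = val x.
Proof. by case/andP: (xchooseP (prefers_exists b (valP x))) => /eqP. Qed.

Lemma rep_prefers (b : pred (aidx P)) (x : realized_val) (i : aidx P) :
  wval (aworld i) = val x -> b i -> b (rep b x).
Proof.
move=> wi bi; case/andP: (xchooseP (prefers_exists b (valP x))) => _ /orP [//|].
by move=> /existsPn/(_ i); rewrite wi eqxx bi.
Qed.

Lemma mass_at_rep_upper (b : pred (aidx P)) (x : realized_val) :
  mass_at b (val x) <= (if b (rep b x) then adistr P (val x) else 0).
Proof.
case: ifP => [_|nb]; first exact: mass_at_le_adistr.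
rewrite le_eqVlt; apply/orP; left; apply/eqP/big1 => i /andP [/eqP wi bi].
by rewrite (rep_prefers wi bi) in nb.
Qed.

Lemma mass_at_rep_lower (b : pred (aidx P)) (x : realized_val) :
  (if b (rep (predC b) x) then adistr P (val x) else 0) <= mass_at b (val x).
Proof.
case: ifP => [brep|_]; last by apply: sumr_ge0 => i _; apply: apr_ge0.
rewrite -mass_at_predT le_eqVlt; apply/orP; left; apply/eqP/eq_bigl => i.
case: (eqVneq (wval (aworld i)) (val x)) => //= wi.
apply/esym/negPn/negP => nbi.
by have := rep_prefers wi (nbi : predC b i); rewrite /= brep.
Qed.

Lemma realized_nonempty : (0 < #|realized_val|)%N.
Proof.
have [i _] := card_gt0P (aidx_nonempty P).
have Pi : realized (wval (aworld i)) by apply/existsP; exists i.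
by apply/card_gt0P; exists (exist (fun w => w \in realized) _ Pi).
Qed.

Lemma adistr_val_ge0 (x : realized_val) : 0 <= adistr P (val x).
Proof. by rewrite ffunE; apply: sumr_ge0 => i _; apply: apr_ge0. Qed.

Lemma sum_adistr_val : \sum_(x : realized_val) adistr P (val x) = 1.
Proof.
rewrite -(apr_sum1 P).
rewrite (eq_bigl (fun i : aidx P => fsat (wval (aworld i)) (FTop V) && predT i)) //.
by rewrite sum_by_valuation; apply: eq_bigr => x _; rewrite mass_at_predT.
Qed.

Definition pithy_reduct (b : pred (aidx P)) : alcp_interp R CN RN V :=
  @ALCPInterp R CN RN V realized_val (fun x => aworld (rep b x))
    (fun x => adistr P (val x)) realized_nonempty adistr_val_ge0 sum_adistr_val.

Lemma pithy_reduct_pithy (b : pred (aidx P)) : pithy (pithy_reduct b).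
Proof. by move=> x y /=; rewrite !rep_val => /val_inj. Qed.

Lemma adistr_pithy_reduct (b : pred (aidx P)) : adistr (pithy_reduct b) = adistr P.
Proof.
apply/ffunP => w; rewrite ffunE /=.
under eq_bigl => x do rewrite rep_val.
rewrite -(sum_realized (F := adistr P) (pred1 w)) ?big_pred1_eq //.
by move=> v /(mass_at_unrealized predT); rewrite mass_at_predT.
Qed.

Lemma pithy_reduct_model (K : kb R CN RN V) (b : pred (aidx P)) :
  alcp_model K P -> alcp_model K (pithy_reduct b).
Proof.
case=> HT HM; split; first by move=> x g; apply: HT.
by rewrite adistr_pithy_reduct.
Qed.

Definition subsumed (C D : concept CN RN) : pred (aidx P) :=
  fun i => `[< subsumes (aworld i) C D >].

Definition kappa_mass (kappa : pform V) : R :=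
  \sum_(x : realized_val | fsat (val x) kappa) adistr P (val x).

Lemma cprobE (C D : concept CN RN) (kappa : pform V) :
  cprob P C D kappa
  = (\sum_(x : realized_val | fsat (val x) kappa) mass_at (subsumed C D) (val x))
    / kappa_mass kappa.
Proof.
rewrite /cprob (sum_by_valuation kappa (subsumed C D)).
rewrite (eq_bigl (fun i => fsat (wval (aworld i)) kappa && predT i)) => [|i];
  last by rewrite andbT.
rewrite sum_by_valuation; congr (_ / _).
by apply: eq_bigr => x _; rewrite mass_at_predT.
Qed.

Lemma cprob_pithy_reduct (b : pred (aidx P)) (C D : concept CN RN)
    (kappa : pform V) :
  cprob (pithy_reduct b) C D kappa
  = (\sum_(x : realized_val | fsat (val x) kappa)
       (if subsumed C D (rep b x) then adistr P (val x) else 0))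
    / kappa_mass kappa.
Proof.
rewrite /cprob /kappa_mass -big_mkcondr /=; congr (_ / _);
  by apply: eq_bigl => x; rewrite rep_val.
Qed.

End PithyReduct.

Theorem lemma1 (R : realType) (CN RN : Type) (V : finType)
  (K : kb R CN RN V) (C D : concept CN RN) (kappa : pform V) :
  ME_consistent K ->
  (forall PME, is_ME (kb_R K) PME -> 0 < fprob PME kappa) ->
  forall P : alcp_interp R CN RN V, alcp_model K P ->
  exists Q1 Q2 : alcp_interp R CN RN V,
    alcp_model K Q1 /\ alcp_model K Q2 /\ pithy Q1 /\ pithy Q2 /\
    cprob Q1 C D kappa <= cprob P C D kappa <= cprob Q2 C D kappa /\
    adistr P = adistr Q1 /\ adistr P = adistr Q2.
Proof.
move=> _ _ P HP; set s := subsumed (P := P) C D.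
exists (pithy_reduct (predC s)), (pithy_reduct s).
do 2 (split; first exact: pithy_reduct_model).
do 2 (split; first exact: pithy_reduct_pithy).
rewrite !adistr_pithy_reduct; split=> //.
rewrite !cprob_pithy_reduct cprobE.
have mass_ge0 : 0 <= (kappa_mass P kappa)^-1.
  by rewrite invr_ge0; apply: sumr_ge0 => x _; apply: adistr_val_ge0.
apply/andP; split; apply: ler_wpM2r => //; apply: ler_sum => x _.
- exact: (mass_at_rep_lower s x).
- exact: (mass_at_rep_upper s x).
Qed.
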